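(* Let $f$ be an $n$-variable Boolean function. Then $${AI}(f)=\min\Big(\min_{1\le k\le n}\mu_k(f+1),\ \min_{1\le k\le n}\mu_k(f)\Big).$$
   Context: An $n$-variable Boolean function is a map $\mathbb{F}_2^n\to\mathbb{F}_2$, with algebraic degree $\deg$ the degree of its algebraic normal form. ${LDA}(h)$ is the minimum algebraic degree of a nonzero $g$ with $h\cdot g=0$, and ${AI}(f)=\min({LDA}(f),{LDA}(1+f))$. For $1\le k\le n$, ${MUL}_k(h)=\{h\cdot g:\deg(g)\le k\}$ and $\mu_k(h)$ is the minimum algebraic degree of the nonzero elements of ${MUL}_k(h)$. *)

From mathcomp Require Import all_boot.
Set Implicit Arguments. Unset Strict Implicit. Unset Printing Implicit Defensive.

Definition point (n : nat) := {ffun 'I_n -> bool}.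
Definition BF (n : nat) := {ffun point n -> bool}.

Definition bf_zero n : BF n := [ffun _ => false].
Definition bf_one n : BF n := [ffun _ => true].
Definition bf_add n (f g : BF n) : BF n := [ffun x => f x (+) g x].
Definition bf_mul n (f g : BF n) : BF n := [ffun x => f x && g x].

(* Coefficient of the monomial prod_{i in u} x_i in the algebraic normal form
   of g (binary Moebius transform): a_u = sum_{x <= u} g(x). *)
Definition anf n (g : BF n) (u : {set 'I_n}) : bool :=
  \big[addb/false]_(x : point n | [forall i, x i ==> (i \in u)]) g x.

(* Algebraic degree: the largest size of a monomial in the ANF (0 for g = 0). *)
Definition deg n (g : BF n) : nat := \max_(u : {set 'I_n} | anf g u) #|u|.

(* Minima over possibly empty sets of degrees: the empty minimum is
   "infinity", encoded as n.+1 (every degree is <= n). *)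
Definition LDA n (h : BF n) : nat :=
  \big[minn/n.+1]_(g : BF n | (g != bf_zero n) && (bf_mul h g == bf_zero n)) deg g.

Definition AI n (f : BF n) : nat := minn (LDA f) (LDA (bf_add (bf_one n) f)).

Definition inMUL n (k : nat) (h p : BF n) : bool :=
  [exists g : BF n, (deg g <= k) && (p == bf_mul h g)].

Definition mu n (k : nat) (h : BF n) : nat :=
  \big[minn/n.+1]_(p : BF n | (p != bf_zero n) && inMUL k h p) deg p.

From mathcomp Require Import all_boot order.
Import Order.TTheory.

Set Implicit Arguments.
Unset Strict Implicit.
Unset Printing Implicit Defensive.

(* An annihilator g of h vanishes wherever h = 1, so g = (1 + h) g lies in
   MUL_n(1 + h); conversely every (1 + h) g annihilates h.  Hence
   LDA(h) <= mu_k(1 + h) for every k, with equality at k = n, so that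
   min_k mu_k(1 + h) = LDA(h).  Applied to h = f and h = 1 + f this gives
   the theorem. *)

Section ComplementMultiples.
Variable n : nat.
Implicit Types (h g : BF n).

Lemma bf_add1K h : bf_add (bf_one n) (bf_add (bf_one n) h) = h.
Proof. by apply/ffunP => x; rewrite !ffunE; case: (h x). Qed.

Lemma bf_mul_compl0 h g : bf_mul h (bf_mul (bf_add (bf_one n) h) g) = bf_zero n.
Proof. by apply/ffunP => x; rewrite !ffunE; case: (h x). Qed.

Lemma annihilator_mul_compl h g :
  bf_mul h g = bf_zero n -> bf_mul (bf_add (bf_one n) h) g = g.
Proof.
move=> hg0; apply/ffunP => x; have := congr1 (fun p : BF n => p x) hg0.
by rewrite !ffunE; case: (h x); case: (g x).
Qed.

Lemma deg_le_n g : deg g <= n.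
Proof.
apply/bigmax_leqP => u _.
by rewrite -[X in _ <= X]card_ord max_card.
Qed.

(* [\big[minn/_]] is [\big[Order.min/_]] on [nat] up to conversion; the
   order lemmas only apply once the carrier [nat] is given explicitly. *)
Lemma LDA_le_mu k h : LDA h <= mu k (bf_add (bf_one n) h).
Proof.
apply: (@le_bigmin _ nat); first exact: (@bigmin_le_id _ nat).
move=> p /andP[p0 /existsP[g /andP[_ /eqP pE]]].
by apply: (@bigmin_le_cond _ nat); rewrite p0 pE bf_mul_compl0 /=.
Qed.

Lemma mu_n_le_LDA h : mu n (bf_add (bf_one n) h) <= LDA h.
Proof.
apply: (@le_bigmin _ nat); first exact: (@bigmin_le_id _ nat).
move=> g /andP[g0 /eqP hg0].
apply: (@bigmin_le_cond _ nat); rewrite g0 /=.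
apply/existsP; exists g.
by rewrite deg_le_n annihilator_mul_compl ?eqxx.
Qed.

Lemma bigmin_mu_compl h : 0 < n ->
  \big[minn/n.+1]_(1 <= k < n.+1) mu k (bf_add (bf_one n) h) = LDA h.
Proof.
move=> n_gt0; apply/eqP; rewrite eqn_leq; apply/andP; split.
  apply: leq_trans (mu_n_le_LDA h).
  by apply: (@ge_bigmin_seq _ nat) => //; rewrite mem_index_iota n_gt0 /=.
apply: (@le_bigmin _ nat); first exact: (@bigmin_le_id _ nat).
by move=> k _; apply: LDA_le_mu.
Qed.

End ComplementMultiples.

Theorem proposition10 (n : nat) (hn : 0 < n) (f : BF n) :
  AI f =
  minn (\big[minn/n.+1]_(1 <= k < n.+1) mu k (bf_add (bf_one n) f))
       (\big[minn/n.+1]_(1 <= k < n.+1) mu k f).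
Proof.
by rewrite /AI (bigmin_mu_compl f hn) -(bigmin_mu_compl (bf_add (bf_one n) f) hn)
  bf_add1K.
Qed.
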